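(* Let $k$ be a field, $A=kQ_A/I_A$ a monomial algebra with vertices $e_1,\dots,e_n$, and $B=kQ_B/I_B$ the algebra obtained from $A$ by gluing the distinct non-isolated vertices $e_1$ and $e_n$, with quiver morphism $\varphi:Q_A\to Q_B$. Then: (1) $\varphi$ induces a surjective map $\widetilde\varphi:\mathcal B_A\to\mathcal B_B$, $p\mapsto p^*$, such that $\widetilde\varphi^{-1}(p^* )=\{p\}$ for $p^*\ne f_1$ and $\widetilde\varphi^{-1}(f_1)=\{e_1,e_n\}$. (2) For $p,q\in\mathcal B_A$, if $p\|q$ in $Q_A$ then $p^*\|q^*$ in $Q_B$. (3) $\widetilde\varphi$ induces $k$-linear maps $\psi_0:k((Q_A)_0\|\mathcal B_A)\to k((Q_B)_0\|\mathcal B_B)$, $\psi_1:k((Q_A)_1\|\mathcal B_A)\to k((Q_B)_1\|\mathcal B_B)$, $\psi_2:k(Z_A\|\mathcal B_A)\to k(Z_B\|\mathcal B_B)$, each given by $x\|y\mapsto x^*\|y^*$.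
   Context: Monomial algebra: $A=kQ_A/I_A$, $Q_A$ finite quiver, $I_A$ admissible ideal generated by a minimal set $Z_A$ of paths of length $\ge2$; $\mathcal B_A$ is the set of paths of $Q_A$ (including the trivial paths $e_i$) not containing any element of $Z_A$ as a subpath, a basis of $A$. Gluing: $B$ is the subalgebra of $A$ generated by $f_1=e_1+e_n$, $f_i=e_i$ ($2\le i\le n-1$) and all arrows; $B\cong kQ_B/I_B$, where $Q_B$ has vertices $f_1,\dots,f_{n-1}$ and arrows $\alpha^*$ for the arrows $\alpha$ of $Q_A$ with endpoints given by $\varphi$; $\varphi(e_i)=f_i$ ($2\le i\le n-1$), $\varphi(e_1)=\varphi(e_n)=f_1$, $\varphi(\alpha)=\alpha^*$; for a path $p=a_m\cdots a_1$, $p^*=a_m^*\cdots a_1^*$. $I_B$ is generated by $Z_B=\{r^*:r\in Z_A\}\cup\{b^*c^*:b,c\text{ arrows of }Q_A,\ t(c),s(b)\in\{e_1,e_n\},\ t(c)\neq s(b)\}$, and $\mathcal B_B$ is the set of paths of $Q_B$ avoiding $Z_B$. $p\|q$ means $p,q$ have the same source and the same target; for path sets $X,Y$, $k(X\|Y)$ is the vector space with basis the pairs $x\|y$ of parallel paths $x\in X,y\in Y$. *)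

From HB Require Import structures.
From mathcomp Require Import all_boot all_algebra.
From mathcomp Require Import freeg.
Set Implicit Arguments. Unset Strict Implicit. Unset Printing Implicit Defensive.
Import GRing.Theory.

(* A (candidate) path is a pair (v, [:: a_1; ...; a_m]) : V * seq Ar,     *)
(* read as the path a_m ... a_1 starting at v (arrows listed in the order *)
(* in which they are traversed).  (v, [::]) is the trivial path e_v.      *)

Definition qpath (V Ar : finType) := (V * seq Ar)%type.

Section Paths.
Variables (V Ar : finType) (s t : Ar -> V).

Definition is_qpath (p : qpath V Ar) : bool :=
  match p.2 with
  | [::] => true
  | a :: r => (s a == p.1) && path (fun a b => s b == t a) a r
  end.

Definition psrc (p : qpath V Ar) : V := p.1.
Definition ptgt (p : qpath V Ar) : V := last p.1 [seq t a | a <- p.2].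
Definition plen (p : qpath V Ar) : nat := size p.2.

Definition parallel (p q : qpath V Ar) : bool :=
  (psrc p == psrc q) && (ptgt p == ptgt q).

(* r is a subpath of p: p = w r u for paths u, w.  For a nontrivial r this
   means the arrow word of r is a contiguous factor of that of p; a trivial
   path e_v is a subpath of p iff p passes through v. *)
Definition subpath (r p : qpath V Ar) : bool :=
  if r.2 is [::] then r.1 \in p.1 :: [seq t a | a <- p.2]
  else infix r.2 p.2.

Definition pbasis (Z : seq (qpath V Ar)) (p : qpath V Ar) : bool :=
  is_qpath p && ~~ has (fun z => subpath z p) Z.

Definition is_vertex_path (p : qpath V Ar) : bool := p.2 == [::].
Definition is_arrow_path (p : qpath V Ar) : bool := is_qpath p && (size p.2 == 1%N).

(* Z is a minimal set of paths of length >= 2 generating an admissible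
   ideal I = <Z> of kQ (monomial algebra kQ/I). *)
Definition monomial_relations (Z : seq (qpath V Ar)) : Prop :=
  [/\ all is_qpath Z,
      all (fun z => 2 <= plen z) Z,
      uniq Z,
      (forall z z', z \in Z -> z' \in Z -> subpath z z' -> z = z') &
      (* admissibility: R^N is contained in I for some N *)
      (exists N : nat, forall p, is_qpath p -> N <= plen p ->
                        has (fun z => subpath z p) Z)].

End Paths.

(* We work inside the free k-vector space {freeg P / k} on the type P of   *)
(* pairs of paths; k(X||Y) is the subspace spanned by the basis pairs      *)
(* x||y with x in X, y in Y, x || y.                                       *)

Definition ppairs (V Ar : finType) := (qpath V Ar * qpath V Ar)%type.

Definition par_basis (V Ar : finType) (s t : Ar -> V)
  (X Y : pred (qpath V Ar)) (xy : ppairs V Ar) : bool :=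
  [&& X xy.1, Y xy.2 & parallel t xy.1 xy.2].

Definition in_par_space (k : fieldType) (V Ar : finType) (s t : Ar -> V)
  (X Y : pred (qpath V Ar)) (D : {freeg (ppairs V Ar) / k}) : Prop :=
  forall xy, coeff xy D != 0%R -> par_basis s t X Y xy.

Definition bvec (k : fieldType) (K : choiceType) (x : K) : {freeg K / k} :=
  [freeg [:: (1%R, x)]].

(* Q_B has vertex type {v : V | v != en}; the vertex e1 of this subtype   *)
(* plays the role of f_1 = e_1 + e_n, and the other vertices e_i play the *)
(* role of f_i.  The arrows of Q_B are the alpha^*, identified with the   *)
(* arrows alpha of Q_A.                                                    *)

Section Gluing.
Variables (V Ar : finType) (s t : Ar -> V) (e1 en : V) (h1n : e1 != en).

Definition gV : finType := {v : V | v != en}.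

Definition f1 : gV := exist (fun v => v != en) e1 h1n.

Definition phiV (v : V) : gV := insubd f1 v.

Definition sB (a : Ar) : gV := phiV (s a).
Definition tB (a : Ar) : gV := phiV (t a).

Definition pstar (p : qpath V Ar) : qpath gV Ar := (phiV p.1, p.2).

Definition pairstar (xy : ppairs V Ar) : ppairs gV Ar :=
  (pstar xy.1, pstar xy.2).

Definition ZB (ZA : seq (qpath V Ar)) : seq (qpath gV Ar) :=
  [seq pstar r | r <- ZA] ++
  [seq (phiV (s bc.2), [:: bc.2; bc.1]) |
     bc <- [seq (b, c) | b <- enum Ar, c <- enum Ar] &
     [&& t bc.2 \in [:: e1; en], s bc.1 \in [:: e1; en] & t bc.2 != s bc.1]].

End Gluing.

Definition non_isolated (V Ar : finType) (s t : Ar -> V) (v : V) : Prop :=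
  exists a : Ar, s a = v \/ t a = v.

Definition induces_linear_map (k : fieldType) (V Ar : finType) (s t : Ar -> V)
  (e1 en : V) (h1n : e1 != en)
  (XA YA : pred (qpath V Ar)) (XB YB : pred (qpath (gV en) Ar)) : Prop :=
  exists psi : {linear {freeg (ppairs V Ar) / k} -> {freeg (ppairs (gV en) Ar) / k}},
    (forall D, in_par_space s t XA YA D ->
               in_par_space (sB s h1n) (tB t h1n) XB YB (psi D)) /\
    (forall xy, par_basis s t XA YA xy ->
               psi (bvec k xy) = bvec k (pairstar h1n xy)).

From HB Require Import structures.
From mathcomp Require Import all_boot all_algebra.
From mathcomp Require Import freeg.
Set Implicit Arguments. Unset Strict Implicit. Unset Printing Implicit Defensive.
Import GRing.Theory.

(* Gluing keeps the arrow word of a path and only pushes its source through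
   phi, which is injective away from f_1; hence p |-> p^* is injective except
   that it identifies e_1 and e_n.  A path of Q_B lifts to a path of Q_A unless
   two consecutive arrows meet at f_1 coming from different vertices among
   e_1, e_n, and these are exactly the new relations b^* c^* of Z_B, while the
   old relations r^* have the same arrow words as r.  So p^* avoids Z_B iff p
   avoids Z_A.  Sources and targets commute with phi, which gives (2), and the
   maps of (3) are pushforwards of free vector spaces along x||y |-> x^*||y^*. *)

Lemma path_infix2P (T : eqType) (e : rel T) x p :
  reflect (forall c b, infix [:: c; b] (x :: p) -> e c b) (path e x p).
Proof.
elim: p x => [|y p IH] x; first by apply: ReflectT => c b; rewrite /= andbF.
apply: (iffP andP) => [[exy /IH hp] c b | H].
  rewrite infix_consl !prefix_cons prefix0s andbT.
  by case/orP => [/andP[/eqP -> /eqP ->] | /hp].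
split; first by apply: H; rewrite infix_consl !prefix_cons prefix0s !eqxx.
by apply/IH => c b hcb; apply: H; rewrite infix_consl hcb orbT.
Qed.

Lemma is_qpath_adjacent (V Ar : finType) (s t : Ar -> V) p c b :
  is_qpath s t p -> infix [:: c; b] p.2 -> s b = t c.
Proof. by case: p => v [|a r] //= /andP[_ /path_infix2P hp] /hp /eqP. Qed.

Section Gluing.
Variables (V Ar : finType) (s t : Ar -> V) (e1 en : V) (h1n : e1 != en).

Local Notation phi := (phiV h1n).
Local Notation f1 := (f1 h1n).
Local Notation sB := (sB s h1n).
Local Notation tB := (tB t h1n).
Local Notation pstar := (pstar h1n).

Definition crosses_glue (c b : Ar) : bool :=
  [&& t c \in [:: e1; en], s b \in [:: e1; en] & t c != s b].

Lemma val_phiV v : val (phi v) = if v == en then e1 else v.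
Proof. by rewrite /phiV val_insubd; case: eqP. Qed.

Lemma phiV_valK : cancel val phi.
Proof.
move=> w; apply: val_inj; rewrite val_phiV; case: eqP => // Ew.
by have := valP w; rewrite Ew eqxx.
Qed.

Lemma phiV_eq_f1 v : (phi v == f1) = (v \in [:: e1; en]).
Proof.
rewrite -(inj_eq val_inj) val_phiV /= !inE.
by case: (v =P en) => [->|_]; rewrite ?eqxx ?orbT ?orbF.
Qed.

Lemma phiV_inj_f1 v w : phi v != f1 -> phi v = phi w -> v = w.
Proof.
move=> hv Evw; have hw : phi w != f1 by rewrite -Evw.
move: hv hw; rewrite !phiV_eq_f1 !inE !negb_or => /andP[_ /negbTE hv] /andP[_ /negbTE hw].
by move/(congr1 val): Evw; rewrite !val_phiV hv hw.
Qed.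

Lemma phiV_adjacent c b :
  phi (s b) = phi (t c) -> ~~ crosses_glue c b -> s b = t c.
Proof.
move=> Ebc; have [tc_f1 | /phiV_inj_f1 inj] := eqVneq (phi (t c)) f1.
  have tc_glued : t c \in [:: e1; en] by rewrite -phiV_eq_f1 tc_f1.
  have sb_glued : s b \in [:: e1; en] by rewrite -phiV_eq_f1 Ebc tc_f1.
  by rewrite /crosses_glue tc_glued sb_glued negbK => /eqP ->.
by rewrite (inj _ (esym Ebc)).
Qed.

Lemma is_qpath_no_crossing p c b :
  is_qpath s t p -> infix [:: c; b] p.2 -> ~~ crosses_glue c b.
Proof.
by move=> hp /(is_qpath_adjacent hp) Ebc; rewrite /crosses_glue Ebc eqxx !andbF.
Qed.

Lemma is_qpath_pstar p : is_qpath s t p -> is_qpath sB tB (pstar p).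
Proof.
case: p => v [|a r] //; rewrite /is_qpath /= => /andP[/eqP Ea hp].
by rewrite /sB Ea eqxx /=; apply: sub_path hp => x y /eqP Exy; rewrite /sB /tB Exy.
Qed.

Lemma is_qpath_lift w a r :
  is_qpath sB tB (w, a :: r) ->
  (forall c b, infix [:: c; b] (a :: r) -> ~~ crosses_glue c b) ->
  is_qpath s t (s a, a :: r).
Proof.
rewrite /is_qpath /= eqxx => /andP[_ /path_infix2P hp] no_cross.
apply/path_infix2P => c b hcb; apply/eqP/phiV_adjacent; last exact: no_cross.
exact/eqP/hp.
Qed.

Lemma pstar_inj p q : is_qpath s t p -> is_qpath s t q ->
  pstar p = pstar q -> pstar p != (f1, [::]) -> p = q.
Proof.
case: p => v [|a r]; case: q => w l; rewrite /pstar /= => hp hq [Evw El] hne; subst l.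
  by congr pair; apply: phiV_inj_f1 Evw; apply: contra hne => /eqP ->.
by move: hp hq; rewrite /is_qpath /= => /andP[/eqP <- _] /andP[/eqP <- _].
Qed.

Lemma ptgt_pstar p : ptgt tB (pstar p) = phi (ptgt t p).
Proof. by rewrite /ptgt /= -(last_map phi) -map_comp. Qed.

Lemma parallel_pstar p q : parallel t p q -> parallel tB (pstar p) (pstar q).
Proof.
rewrite /parallel !ptgt_pstar /psrc /= => /andP[/eqP -> /eqP ->].
by rewrite !eqxx.
Qed.

Lemma subpath_pstar r p : r.2 != [::] -> subpath tB (pstar r) (pstar p) = subpath t r p.
Proof. by case: r => v [|a l]. Qed.

Lemma mem_ZB_pstar ZA r : r \in ZA -> pstar r \in ZB s t h1n ZA.
Proof. by move=> rZA; rewrite /ZB mem_cat map_f. Qed.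

Lemma mem_ZB_crossing ZA c b :
  crosses_glue c b -> (phi (s c), [:: c; b]) \in ZB s t h1n ZA.
Proof.
move=> cross; rewrite /ZB mem_cat; apply/orP; right.
apply: (map_f (fun bc : Ar * Ar => (phi (s bc.2), [:: bc.2; bc.1])) (x := (b, c))).
rewrite mem_filter; apply/andP; split; first exact: cross.
by apply: allpairs_f; rewrite mem_enum.
Qed.

Section Basis.
Variable ZA : seq (qpath V Ar).
Hypothesis ZA_nontrivial : forall z, z \in ZA -> z.2 != [::].

Local Notation ZB := (ZB s t h1n ZA).

Lemma pbasis_trivial v : pbasis s t ZA (v, [::]).
Proof.
apply/hasPn => -[u l] zZA; rewrite /subpath.
by case: l zZA => // /ZA_nontrivial.
Qed.

Lemma pbasis_pstar p : pbasis s t ZA p -> pbasis sB tB ZB (pstar p).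
Proof.
case/andP => hp noZ; apply/andP; split; first exact: is_qpath_pstar.
rewrite has_cat negb_or has_map; apply/andP; split.
  apply/hasPn => r rZA /=; rewrite subpath_pstar ?ZA_nontrivial //.
  exact: (hasPn noZ).
apply/hasPn => z /mapP[[b c]]; rewrite mem_filter /= => /andP[cross _] ->.
by apply/negP => /(is_qpath_no_crossing hp) /negP; apply.
Qed.

Lemma pbasis_lift q : pbasis sB tB ZB q -> exists2 p, pbasis s t ZA p & pstar p = q.
Proof.
case: q => w [|a r] /andP[hq noZ].
  by exists (val w, [::]); rewrite ?pbasis_trivial // /pstar phiV_valK.
have Ea : phi (s a) = w by case/andP: hq => /eqP.
have lift : pstar (s a, a :: r) = (w, a :: r) by rewrite /pstar /= Ea.
exists (s a, a :: r) => //; apply/andP; split.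
  apply: is_qpath_lift hq _ => c b hcb; apply: contra noZ => cross.
  by apply/hasP; exists (phi (s c), [:: c; b]); first exact: mem_ZB_crossing.
apply/hasPn => z zZA; apply/negP => sub.
move/hasPn: noZ => /(_ _ (mem_ZB_pstar zZA)).
by rewrite -lift subpath_pstar ?ZA_nontrivial // sub.
Qed.

Lemma pstar_eq_f1 p :
  (pbasis s t ZA p /\ pstar p = (f1, [::])) <-> (p = (e1, [::]) \/ p = (en, [::])).
Proof.
case: p => v l; split.
  case=> _; rewrite /pstar => -[/eqP]; rewrite phiV_eq_f1 !inE.
  by case/orP => /eqP -> ->; [left | right].
case=> -[-> ->]; split; rewrite ?pbasis_trivial // /pstar; congr pair;
  by apply/eqP; rewrite phiV_eq_f1 !inE eqxx ?orbT.
Qed.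

End Basis.
End Gluing.

Section Pushforward.
Local Open Scope ring_scope.
Variables (k : fieldType) (K L : choiceType) (f : K -> L).

Definition fgpush (D : {freeg K / k}) : {freeg L / k} :=
  fglift (fun x => bvec k (f x)) D.

HB.instance Definition _ := GRing.isZmodMorphism.Build _ _ fgpush
  (lift_is_additive (fun x => bvec k (f x))).

Lemma fgpushE D : fgpush D = \sum_(z <- dom D) coeff z D *: bvec k (f z).
Proof.
rewrite -{1}(freeg_sumE D) raddf_sum; apply: eq_bigr => z _.
exact: liftU.
Qed.

Lemma fgpushZ : scalable fgpush.
Proof.
move=> c D.
have -> : c *: D = \sum_(x <- dom D) << c * coeff x D *g x >> by [].
rewrite raddf_sum fgpushE scaler_sumr; apply: eq_bigr => z _.
by rewrite scalerA; exact: liftU.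
Qed.

HB.instance Definition _ := GRing.isScalable.Build k _ _ *:%R fgpush fgpushZ.

Definition fgpush_linear : {linear {freeg K / k} -> {freeg L / k}} := fgpush.

Lemma fgpush_bvec x : fgpush (bvec k x) = bvec k (f x).
Proof. by rewrite /fgpush /bvec liftU scale1r. Qed.

Lemma coeff_fgpush_neq0 D y :
  coeff y (fgpush D) != 0 -> exists2 x, coeff x D != 0 & f x = y.
Proof.
rewrite fgpushE raddf_sum.
have [/hasP[x xD /eqP fx] _ | /hasPn no_preim] :=
  boolP (has (fun x => f x == y) (dom D)).
  by exists x; rewrite // -mem_dom.
rewrite big_seq big1 ?eqxx // => z zD.
by rewrite /= coeffZ /bvec coeffU mul1r (negbTE (no_preim z zD)) mulr0.
Qed.

End Pushforward.

Lemma induces_linear_map_pstar (k : fieldType) (V Ar : finType) (s t : Ar -> V)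
    (e1 en : V) (h1n : e1 != en)
    (XA YA : pred (qpath V Ar)) (XB YB : pred (qpath (gV en) Ar)) :
  (forall x, XA x -> XB (pstar h1n x)) -> (forall y, YA y -> YB (pstar h1n y)) ->
  induces_linear_map k s t h1n XA YA XB YB.
Proof.
move=> XAB YAB; exists (fgpush_linear k (pairstar h1n)); split => [D DA xy | xy _].
  case/coeff_fgpush_neq0 => z /DA /and3P[Xz Yz par] <-.
  by apply/and3P; split; [exact: XAB | exact: YAB | exact: parallel_pstar].
exact: fgpush_bvec.
Qed.

Unset Implicit Arguments.
Theorem proposition3p3 (k : fieldType) (V Ar : finType) (s t : Ar -> V)
  (e1 en : V) (h1n : e1 != en) (ZA : seq (qpath V Ar)) :
  monomial_relations s t ZA ->
  non_isolated s t e1 -> non_isolated s t en ->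
  let sb := sB s h1n in
  let tb := tB t h1n in
  let ZB := ZB s t h1n ZA in
  let BA := pbasis s t ZA in
  let BB := pbasis sb tb ZB in
  let st := pstar h1n in
  let F1 : qpath (gV en) Ar := (f1 h1n, [::]) in
  (* (1) *)
  [/\ (forall p, BA p -> BB (st p)),
      (forall q, BB q -> exists2 p, BA p & st p = q),
      (forall p q, BA p -> BA q -> st p = st q -> st p != F1 -> p = q) &
      (forall p, (BA p /\ st p = F1) <-> (p = (e1, [::]) \/ p = (en, [::])))] /\
  (* (2) *)
  (forall p q, BA p -> BA q -> parallel t p q -> parallel tb (st p) (st q)) /\
  (* (3) *)
  [/\ induces_linear_map k s t h1n (@is_vertex_path V Ar) BA
                               (@is_vertex_path (gV en) Ar) BB,
      induces_linear_map k s t h1n (is_arrow_path s t) BA (is_arrow_path sb tb) BB &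
      induces_linear_map k s t h1n (fun x => x \in ZA) BA (fun x => x \in ZB) BB].
Proof.
move=> [_ ZA_long _ _ _] _ _ sb tb ZB' BA BB st F1.
subst sb tb ZB' BA BB st F1.
have ZA_nontrivial z : z \in ZA -> z.2 != [::].
  by move/(allP ZA_long); rewrite /plen; case: z.2.
split; [split | split].
- exact: pbasis_pstar.
- exact: pbasis_lift.
- by move=> p q /andP[hp _] /andP[hq _]; exact: pstar_inj hp hq.
- exact: pstar_eq_f1.
- by move=> p q _ _; exact: parallel_pstar.
- split; apply: induces_linear_map_pstar; try exact: pbasis_pstar.
  + by case.
  + by move=> x /andP[hx size_x]; rewrite /is_arrow_path is_qpath_pstar.
  + exact: mem_ZB_pstar.
Qed.
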